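(* There exists an absolute constant $c>0$ such that the following holds. Let $(\mathsf{CAL}_T)_{T\ge1}$ be calibration measures and $\varepsilon:\mathbb Z_{>0}\to[0,\infty)$ a function such that for every positive integer $T$: (1) (Actionability) for every decision task $Z=(A,U)$ with $U:A\times\{0,1\}\to[0,1]$ and every $\alpha\ge0$ there exists a randomized response function $r_{Z,\alpha}:[0,1]\to\Delta(A)$ (not depending on the distribution) such that every distribution $\mathcal D$ on $[0,1]\times\{0,1\}$ with $\mathsf{CAL}_T(\mathcal D)\le\alpha$ satisfies $\mathsf{SR}_Z(r_{Z,\alpha},\mathcal D)\le\alpha$; and (2) (Testability) for every calibrated distribution $\mathcal D$ on $[0,1]\times\{0,1\}$, if $S_T$ is the uniform distribution over $T$ i.i.d. samples from $\mathcal D$, then $\mathbb E[\mathsf{CAL}_T(S_T)]\le\varepsilon(T)$. Then $\varepsilon(T)\ge c\,T^{-1/2}$ for every positive integer $T$.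
   Context: A calibration measure $\mathsf{CAL}_T$ assigns a nonnegative real number to each distribution of pairs $(p,y)\in[0,1]\times\{0,1\}$ (in particular to uniform distributions over finite samples). A distribution of $(p,y)$ is calibrated if $\mathbb E[y\mid p]=p$. A decision task $Z=(A,U)$ consists of an action set $A$ and a utility function $U:A\times\{0,1\}\to[0,1]$. For a randomized response function $r:[0,1]\to\Delta(A)$ and a distribution $\mathcal D$ on $[0,1]\times\{0,1\}$, the swap regret is $\mathsf{SR}_Z(r,\mathcal D)=\sup_{\sigma:A\to A}\mathbb E_{(p,y)\sim\mathcal D,\,a\sim r(p)}[U(\sigma(a),y)-U(a,y)]$. *)

(* Distributions on [0,1] x {0,1} are represented by their
   probability mass functions m : R -> bool -> R with finite support. *)
From HB Require Import structures.
From mathcomp Require Import all_boot all_order all_algebra.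
From mathcomp Require Import reals.
Set Implicit Arguments. Unset Strict Implicit. Unset Printing Implicit Defensive.
Import Order.TTheory GRing.Theory Num.Theory.
Local Open Scope ring_scope.

Section Defs.
Variable R : realType.

Definition is_dist_on (m : R -> bool -> R) (s : seq R) : Prop :=
  [/\ uniq s,
      (forall p y, 0 <= m p y),
      (forall p y, m p y != 0 -> p \in s),
      (forall p, p \in s -> 0 <= p <= 1) &
      \sum_(p <- s) (m p false + m p true) = 1].

Definition is_dist (m : R -> bool -> R) : Prop := exists s, is_dist_on m s.

(* calibrated: E[y | p] = p, i.e. P(p, y=1) = p * P(p) for every p *)
Definition calibrated (m : R -> bool -> R) : Prop :=
  forall p, m p true = p * (m p false + m p true).

Definition expect (m : R -> bool -> R) (s : seq R) (g : R -> bool -> R) : R :=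
  \sum_(p <- s) \sum_(y : bool) m p y * g p y.

Definition is_response (A : finType) (r : R -> A -> R) : Prop :=
  forall p, 0 <= p <= 1 -> (forall a, 0 <= r p a) /\ \sum_(a : A) r p a = 1.

Definition is_utility (A : finType) (U : A -> bool -> R) : Prop :=
  forall a y, 0 <= U a y <= 1.

Definition swap_gain (A : finType) (U : A -> bool -> R) (r : R -> A -> R)
    (m : R -> bool -> R) (s : seq R) (sigma : A -> A) : R :=
  expect m s (fun p y => \sum_(a : A) r p a * (U (sigma a) y - U a y)).

(* swap regret: supremum over all sigma : A -> A (a finite max; sigma = id gives 0) *)
Definition swap_regret (A : finType) (U : A -> bool -> R) (r : R -> A -> R)
    (m : R -> bool -> R) (s : seq R) : R :=
  \big[Num.max/0]_(sigma : {ffun A -> A}) swap_gain U r m s sigma.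

Definition empirical (T : nat) (x : 'I_T -> R * bool) : R -> bool -> R :=
  fun p y => (#|[set i | x i == (p, y)]|)%:R / T%:R.

(* E[ CAL_T(S_T) ] where S_T is the empirical distribution of T i.i.d.
   samples from m (sample points are drawn from the support list s). *)
Definition expected_cal (CAL : (R -> bool -> R) -> R) (T : nat)
    (m : R -> bool -> R) (s : seq R) : R :=
  \sum_(f : {ffun 'I_T -> 'I_(size s) * bool})
     (\prod_(i < T) m (nth 0 s (f i).1) (f i).2) *
     CAL (empirical (fun i => (nth 0 s (f i).1, (f i).2))).

End Defs.

(* Use the task of guessing the label, U(a, y) = [a = y], at level
   alpha = (w + 1) / 4T with w = floor(sqrt T / 8).  At the forecast 1/2 the
   response puts mass >= 1/2 on some action a.  On a sample forecast at 1/2 in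
   which the label a is outnumbered by more than w, swapping every action to
   ~~ a gains more than alpha, so actionability forces CAL_T > alpha there.
   Under the calibrated fair coin the count of a-labels is Binomial(T, 1/2);
   as every binomial coefficient is at most 2^T / sqrt(T + 1), the window of
   width w around T/2 has mass at most 9/10, so by symmetry the lower tail has
   mass at least 1/20, and eps(T) >= E[CAL_T(S_T)] >= alpha / 20. *)

From HB Require Import structures.
From mathcomp Require Import all_boot all_order all_algebra.
From mathcomp Require Import reals.
From mathcomp Require Import zify ring lra.
Import Order.TTheory GRing.Theory Num.Theory.

Set Implicit Arguments.
Unset Strict Implicit.
Unset Printing Implicit Defensive.

Lemma leq_bin_half T j : 'C(T, j) <= 'C(T, T./2).
Proof.
have T_half : T./2.*2 <= T by rewrite -[leqRHS]odd_double_half leq_addl.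
have bin_nondecr : {in [pred i | i <= T./2] &, {homo binomial T : i k / i <= k}}.
  apply: homo_leq_in => //.
  - by move=> k i l; apply: leq_trans.
  - by move=> i l _ lD k /andP[_ /ltnW /leq_trans]; apply.
  move=> i _ iT; have {}iT : i.+1 <= T./2 := iT.
  by rewrite -(leq_pmul2l (ltn0Sn i)) mul_bin_left leq_mul2r; apply/orP; right; lia.
have [jT|Tj] := leqP j T./2; first exact: (bin_nondecr j _ jT (leqnn _) jT).
have [jT'|Tj'] := leqP j T; last by rewrite bin_small.
by rewrite -bin_sub //; apply: bin_nondecr; rewrite ?inE; lia.
Qed.

Lemma bin_odd_center n : 'C(n.*2.+1, n.+1) = 'C(n.*2.+1, n).
Proof. by rewrite -bin_sub; [congr 'C(_, _)|]; lia. Qed.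

Lemma mul_bin_center n : n.+1 * 'C(n.*2.+1, n) = n.*2.+1 * 'C(n.*2, n).
Proof. by rewrite -bin_odd_center -mul_bin_diag. Qed.

Lemma bin_even_center_bound n : 'C(n.*2, n) ^ 2 * n.*2.+1 <= 16 ^ n.
Proof.
elim: n => [|n IHn]; first by rewrite bin0.
have step : n.+1 ^ 2 * 'C(n.+1.*2, n.+1) ^ 2 = 4 * n.*2.+1 ^ 2 * 'C(n.*2, n) ^ 2.
  by rewrite doubleS binS bin_odd_center addnn -mul2n -expnMn mulnCA mul_bin_center; ring.
rewrite -(leq_pmul2l (expn_gt0 n.+1 2)) mulnA step.
have -> : 4 * n.*2.+1 ^ 2 * 'C(n.*2, n) ^ 2 * n.+1.*2.+1 =
  4 * (n.*2.+1 * n.+1.*2.+1) * ('C(n.*2, n) ^ 2 * n.*2.+1) by ring.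
apply: leq_trans (leq_mul (leqnn _) IHn) _.
(* (2n + 1)(2n + 3) <= (2n + 2)^2 *)
by rewrite (expnS 16) [_ * (16 * _)]mulnA leq_mul2r; apply/orP; right; nia.
Qed.

Lemma bin_center_bound T : 'C(T, T./2) ^ 2 * T.+1 <= 4 ^ T.
Proof.
have exp4_double n : 4 ^ n.*2 = 16 ^ n by rewrite -mul2n expnM.
move: (odd_double_half T); set n := T./2; case: (odd T) => <-; last first.
  by rewrite add0n exp4_double bin_even_center_bound.
have := bin_even_center_bound n.+1.
rewrite add1n (expnS 4) exp4_double doubleS binS bin_odd_center addnn -mul2n.
rewrite expnMn (expnS 16).
rewrite -mulnA -[16]/(4 * 4) -mulnA leq_pmul2l // => /(leq_trans _); apply.
by rewrite leq_mul2l ltnW ?orbT.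
Qed.

Definition bin_lower_tail T w := \sum_(j < T.+1 | j.*2 + w < T) 'C(T, j).

Lemma bin_upper_tail T w :
  \sum_(j < T.+1 | T + w < j.*2) 'C(T, j) = bin_lower_tail T w.
Proof.
rewrite /bin_lower_tail (reindex_inj rev_ord_inj) /=.
apply: eq_big => [j|j _]; rewrite subSS; have := ltn_ord j.
  by move=> jT; apply/idP/idP; lia.
by move=> jT; rewrite bin_sub // -ltnS.
Qed.

Lemma bin_window_bound T w :
  \sum_(j < T.+1 | (T <= j.*2 + w) && (j.*2 <= T + w)) 'C(T, j) <= w.+1 * 'C(T, T./2).
Proof.
apply: (@leq_trans (\sum_(j < T.+1 | (T <= j.*2 + w) && (j.*2 <= T + w)) 'C(T, T./2))).
  by apply: leq_sum => j _; apply: leq_bin_half.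
rewrite sum_nat_const leq_mul2r; apply/orP; right.
pose shift (j : 'I_T.+1) : 'I_w.+1 := inord (j - (T - w) %/ 2).
rewrite -[w.+1]card_ord; apply: (@leq_card_in _ _ shift) => j k.
rewrite /= => /andP[jl jr] /andP[kl kr] /(congr1 val).
rewrite /= !inordK; [move=> e; apply: val_inj => /=; lia | lia | lia].
Qed.

Lemma bin_tails_bound T w : 2 ^ T <= (bin_lower_tail T w).*2 + w.+1 * 'C(T, T./2).
Proof.
have -> : 2 ^ T = \sum_(j < T.+1) 'C(T, j).
  by rewrite -[2]/(1 + 1) expnDn; apply: eq_bigr => j _; rewrite !exp1n !muln1.
rewrite -addnn -{2}(bin_upper_tail T w) -addnA.
apply: leq_trans (leq_add (leqnn _) (leq_add (leqnn _) (bin_window_bound T w))).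
rewrite /bin_lower_tail (big_mkcond (fun j : 'I_T.+1 => j.*2 + w < T)).
rewrite (big_mkcond (fun j : 'I_T.+1 => T + w < j.*2)).
rewrite (big_mkcond (fun j : 'I_T.+1 => (T <= j.*2 + w) && (j.*2 <= T + w))).
rewrite -!big_split /=.
apply: leq_sum => j _.
by case: ifP; case: ifP; case: ifP; lia.
Qed.

Local Open Scope ring_scope.

Section SetSums.
Variables (V : nmodType) (I : finType).

Lemma sum_set_card (F : nat -> V) :
  \sum_(A : {set I}) F #|A| = \sum_(j < #|I|.+1) F j *+ 'C(#|I|, j).
Proof.
rewrite (partition_big (fun A : {set I} => inord #|A| : 'I_#|I|.+1) xpredT) //=.
apply: eq_bigr => j _; rewrite -card_draws -sumr_const.
apply: eq_big => [A|A /eqP <-]; last by rewrite inordK // ltnS max_card.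
by rewrite inE -val_eqE /= inordK // ltnS max_card.
Qed.

Lemma sum_ffun_label_set (b : bool) (F : {set I} -> V) :
  \sum_(f : {ffun I -> 'I_1 * bool}) F [set i | (f i).2 == b] = \sum_(A : {set I}) F A.
Proof.
have eqbK (c : bool) : (c == b) == b = c by case: b; case: c.
pose label (A : {set I}) := [ffun i => (ord0 : 'I_1, (i \in A) == b)].
pose labelled (f : {ffun I -> 'I_1 * bool}) := [set i | (f i).2 == b].
have labelK : cancel label labelled.
  by move=> A; apply/setP => i; rewrite !inE ffunE eqbK.
have labelledK : cancel labelled label.
  move=> f; apply/ffunP => i; rewrite !ffunE inE.
  by case: (f i) => k c /=; rewrite (ord1 k) eqbK.
rewrite (reindex label); last exact: onW_bij (Bijective labelK labelledK).
by apply: eq_bigr => A _; rewrite -/(labelled (label A)) labelK.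
Qed.

Lemma sumr_if_muln (P : pred I) (c : V) (n : I -> nat) :
  \sum_i (if P i then c else 0) *+ n i = c *+ \sum_(i | P i) n i.
Proof.
by rewrite -sumrMnr [RHS]big_mkcond; apply: eq_bigr => i _; case: ifP; rewrite ?mul0rn.
Qed.

End SetSums.

Section MatchingPennies.
Variable R : realType.

Definition match_utility : bool -> bool -> R := fun a y => (a == y)%:R.

Definition fair_coin : R -> bool -> R := fun p _ => if p == 2^-1 then 2^-1 else 0.

Definition nlabel T (x : 'I_T -> R * bool) (y : bool) : nat := #|[set i | (x i).2 == y]|.

Lemma match_utility_is_utility : is_utility match_utility.
Proof. by move=> a y; rewrite /match_utility; case: (a == y); rewrite ?lexx ?ler01. Qed.

Lemma fair_coin_dist : is_dist_on fair_coin [:: 2^-1].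
Proof.
rewrite /fair_coin; split => //.
- by move=> p y; case: ifP; lra.
- by move=> p y; case: (p =P 2^-1) => [->|]; rewrite ?mem_seq1 ?eqxx.
- by move=> p; rewrite mem_seq1 => /eqP ->; lra.
by rewrite big_seq1 eqxx; lra.
Qed.

Lemma fair_coin_calibrated : calibrated fair_coin.
Proof. by move=> p; rewrite /fair_coin; case: (p =P 2^-1) => [->|]; lra. Qed.

Lemma response_half_mass (r : R -> bool -> R) p :
  is_response r -> 0 <= p <= 1 -> exists a, 2^-1 <= r p a.
Proof.
move=> r_resp /r_resp[_]; rewrite big_bool /= => r_sum.
by have [r_half|/ltW r_half] := leP (2^-1) (r p true); [exists true|exists false]; lra.
Qed.

Lemma swap_gain_const (r : R -> bool -> R) m p0 b :
  swap_gain match_utility r m [:: p0] [ffun _ => b] =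
  r p0 (~~ b) * (m p0 b - m p0 (~~ b)).
Proof.
by rewrite /swap_gain /expect big_seq1 !big_bool !ffunE /match_utility; case: b => /=; ring.
Qed.

Section PointForecast.
Variables (T : nat) (x : 'I_T -> R * bool) (p0 : R).
Hypothesis x_p0 : forall i, (x i).1 = p0.

Lemma empirical_point p y :
  empirical x p y = if p == p0 then (nlabel x y)%:R / T%:R else 0.
Proof.
rewrite /empirical /nlabel; case: (p =P p0) => [->|p_ne].
  congr (_%:R / _); apply: eq_card => i; rewrite !inE -(x_p0 i).
  by case: (x i) => q c; rewrite xpair_eqE eqxx.
rewrite (_ : #|_| = 0)%N ?mul0r //; apply: eq_card0 => i.
rewrite !inE; have := x_p0 i; case: (x i) => q c /= ->.
by rewrite xpair_eqE; case: (p0 =P p) => // e; case: p_ne.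
Qed.

Lemma nlabel_negb y : (nlabel x y + nlabel x (~~ y))%N = T.
Proof.
rewrite /nlabel -[RHS]card_ord -(cardsC [set i | (x i).2 == y]); congr (_ + _)%N.
by apply: eq_card => i; rewrite !inE; case: y; case: (x i).2.
Qed.

Lemma empirical_point_dist : (0 < T)%N -> 0 <= p0 <= 1 -> is_dist_on (empirical x) [:: p0].
Proof.
move=> T_gt0 p0_01; split => //.
- by move=> p y; rewrite /empirical divr_ge0.
- by move=> p y; rewrite empirical_point mem_seq1; case: (p == p0); rewrite ?eqxx.
- by move=> p; rewrite mem_seq1 => /eqP ->.
rewrite big_seq1 !empirical_point eqxx -mulrDl -natrD addnC nlabel_negb.
by rewrite divff // pnatr_eq0 -lt0n.
Qed.

End PointForecast.

Section Actionable.
Variables (CAL : (R -> bool -> R) -> R) (alpha : R) (r : R -> bool -> R).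
Hypothesis r_resp : is_response r.
Hypothesis r_act : forall m s, is_dist_on m s -> CAL m <= alpha ->
  swap_regret match_utility r m s <= alpha.

Lemma cal_empirical_point_gt T (x : 'I_T -> R * bool) p0 a w :
  (0 < T)%N -> 0 <= p0 <= 1 -> (forall i, (x i).1 = p0) ->
  alpha < r p0 a * (w.+1%:R / T%:R) -> ((nlabel x a).*2 + w < T)%N ->
  alpha < CAL (empirical x).
Proof.
move=> T_gt0 p0_01 x_p0 alpha_lt tail.
rewrite ltNge; apply/negP => /(r_act (empirical_point_dist x_p0 T_gt0 p0_01)).
apply/negP; rewrite -ltNge /swap_regret.
apply: lt_le_trans (le_bigmax _ _ [ffun _ => ~~ a]).
rewrite swap_gain_const negbK !(empirical_point x_p0) eqxx -mulrBl.
apply: lt_le_trans alpha_lt _; apply: ler_wpM2l; first by case: (r_resp p0_01).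
rewrite ler_pM2r ?invr_gt0 ?ltr0n // lerBrDr -natrD ler_nat.
by have := nlabel_negb x a; lia.
Qed.

End Actionable.

Lemma expected_cal_fair_coin_ge (CAL : (R -> bool -> R) -> R) T b (G : nat -> R) :
  (forall x : 'I_T -> R * bool, (forall i, (x i).1 = 2^-1) ->
     G (nlabel x b) <= CAL (empirical x)) ->
  (\sum_(j < T.+1) G j *+ 'C(T, j)) / 2 ^+ T <= expected_cal CAL T fair_coin [:: 2^-1].
Proof.
move=> G_le; rewrite /expected_cal.
have nth_half (k : 'I_1) : nth 0 [:: 2^-1] k = 2^-1 :> R by case: k => [[]].
have -> : \sum_(j < T.+1) G j *+ 'C(T, j) =
    \sum_(f : {ffun 'I_T -> 'I_1 * bool}) G #|[set i | (f i).2 == b]|.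
  by rewrite (sum_ffun_label_set b (fun A => G #|A|)) sum_set_card card_ord.
rewrite mulr_suml; apply: ler_sum => f _.
rewrite (eq_bigr (fun _ => 2^-1)) => [|i _]; last by rewrite nth_half /fair_coin eqxx.
rewrite prodr_const card_ord exprVn mulrC ler_wpM2l ?invr_ge0 ?exprn_ge0 //.
exact: (G_le (fun i => (nth 0 [:: 2^-1] (f i).1, (f i).2)) (fun i => nth_half _)).
Qed.

End MatchingPennies.

Section Numerics.
Variable R : realType.

Lemma tail_mass_ge (l u t w : R) : 1 <= t -> 0 <= w <= t / 8 -> 0 <= u ->
  u ^+ 2 * (t ^+ 2 + 1) <= 1 -> 1 <= 2 * l + (w + 1) * u -> 1 / 20 <= l.
Proof.
move=> t_ge1 /andP[w_ge0 w_le] u_ge0 u_sq total.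
have window_sq : ((w + 1) * u) ^+ 2 <= 81 / 100.
  have t_sq : 0 < t ^+ 2 + 1 by nra.
  have : (w + 1) ^+ 2 <= 81 / 100 * (t ^+ 2 + 1) by nra.
  move=> /(ler_wpM2r (sqr_ge0 u)); rewrite exprMn; nra.
have : (w + 1) * u <= 9 / 10 by nra.
lra.
Qed.

Lemma bin_lower_tail_ge T w : (0 < T)%N -> (w%:R : R) <= Num.sqrt T%:R / 8 ->
  1 / 20 <= (bin_lower_tail T w)%:R / 2 ^+ T :> R.
Proof.
move=> T_gt0 w_le; set t := Num.sqrt (T%:R : R); set P : R := 2 ^+ T.
have P_gt0 : 0 < P by rewrite exprn_gt0.
have t_sq : t ^+ 2 = T%:R by rewrite sqr_sqrtr ?ler0n.
have t_ge1 : 1 <= t by rewrite -sqrtr1 ler_sqrt ?ler1n.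
apply: (@tail_mass_ge _ ('C(T, T./2)%:R / P) t w%:R) => //.
- by rewrite ler0n.
- by rewrite divr_ge0 ?ler0n ?ltW.
- have P_sq : P ^+ 2 = (4 ^ T)%:R.
    by rewrite /P -exprM mulnC exprM natrX expr2 -natrM.
  have := bin_center_bound T; rewrite -(ler_nat R) -P_sq natrM natrX => center.
  by rewrite t_sq natr1 expr_div_n mulrAC ler_pdivrMr ?exprn_gt0 // mul1r.
have := bin_tails_bound T w; rewrite -(ler_nat R) natrX natrD -muln2 !natrM => tails.
rewrite -(ler_pM2r P_gt0) mul1r; apply: le_trans tails _.
by rewrite mulrDl -!mulrA !mulVf ?gt_eqF // !mulr1 natr1 [_ * (1 + 1)]mulrC.
Qed.

Lemma inv_sqrt_le_trunc T : (0 < T)%N ->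
  1 / 8 / Num.sqrt (T%:R : R) <= (Num.truncn (Num.sqrt (T%:R : R) / 8)).+1%:R / T%:R.
Proof.
move=> T_gt0; set t := Num.sqrt (T%:R : R).
have t_gt0 : 0 < t by rewrite sqrtr_gt0 ltr0n.
have trunc_gt : t / 8 < (Num.truncn (t / 8)).+1%:R by rewrite -truncn_le_nat.
rewrite -[T%:R](@sqr_sqrtr _ T%:R) ?ler0n // -/t expr2 invfM mulrA ler_pM2r ?invr_gt0 //.
by rewrite ler_pdivlMr // mul1r mulrC ltW.
Qed.

End Numerics.

Theorem theorem8p1 (R : realType) :
  exists c : R, 0 < c /\
  forall (CAL : nat -> (R -> bool -> R) -> R) (eps : nat -> R),
    (forall T, (0 < T)%N -> 0 <= eps T) ->
    (* calibration measures are nonnegative *)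
    (forall T m, (0 < T)%N -> is_dist m -> 0 <= CAL T m) ->
    (* (1) actionability *)
    (forall T, (0 < T)%N ->
       forall (A : finType), (0 < #|A|)%N ->
       forall U : A -> bool -> R, is_utility U ->
       forall alpha : R, 0 <= alpha ->
       exists r : R -> A -> R, is_response r /\
         forall m s, is_dist_on m s -> CAL T m <= alpha ->
           swap_regret U r m s <= alpha) ->
    (* (2) testability *)
    (forall T, (0 < T)%N ->
       forall m s, is_dist_on m s -> calibrated m ->
         expected_cal (CAL T) T m s <= eps T) ->
    forall T, (0 < T)%N -> c / Num.sqrt (T%:R) <= eps T.
Proof.
exists (1 / 640); split=> [|CAL eps _ CAL_ge0 act test T T_gt0]; first lra.
set t := Num.sqrt (T%:R : R); set w := Num.truncn (t / 8); set y : R := w.+1%:R / T%:R.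
have y_ge := inv_sqrt_le_trunc R T_gt0; rewrite -/t -/y in y_ge.
have t_gt0 : 0 < t by rewrite sqrtr_gt0 ltr0n.
have y_gt0 : 0 < y by apply: lt_le_trans y_ge; rewrite !divr_gt0.
have half_01 : 0 <= (2^-1 : R) <= 1 by apply/andP; split; lra.
have alpha_ge0 : 0 <= y / 4 by rewrite divr_ge0 // ltW.
have bool_gt0 : (0 < #|{: bool}|)%N by rewrite card_bool.
have [r [r_resp r_act]] := act T T_gt0 _ bool_gt0 _ (@match_utility_is_utility R) _ alpha_ge0.
have [a r_half] := response_half_mass r_resp half_01.
pose G j := if (j.*2 + w < T)%N then y / 4 else 0.
apply: le_trans _ (test T T_gt0 _ _ (@fair_coin_dist R) (@fair_coin_calibrated R)).
apply: le_trans _ (expected_cal_fair_coin_ge (b := a) (G := G) _) => [|x x_half].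
  rewrite sumr_if_muln -[y / 4 *+ _]mulr_natr -mulrA.
  rewrite (_ : 1 / 640 / t = (1 / 8 / t / 4) * (1 / 20)); last by field; lra.
  apply: ler_pM; [by rewrite !divr_ge0 // ltW | lra | by rewrite ler_pM2r ?invr_gt0 |].
  by apply: bin_lower_tail_ge; rewrite // truncn_le divr_ge0 // ltW.
rewrite /G; case: ifP => tail.
  apply/ltW/(cal_empirical_point_gt r_resp r_act T_gt0 half_01 x_half _ tail).
  by rewrite -/y; nra.
by apply: CAL_ge0 => //; exists [:: 2^-1]; apply: empirical_point_dist.
Qed.
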